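(* Let $X$ be a Banach lattice and $F_1,F_2\colon X^*\to\mathbb R\cup\{+\infty\}$ two proper functions such that $F_2\ll_{\mathrm Q}F_1$. Then $F_1^*\ll_{\mathrm P}F_2^*$. In particular, if $F\colon X^*\to\mathbb R\cup\{+\infty\}$ is a proper substitutable function, then $F^*\colon X\to\mathbb R\cup\{+\infty\}$ is submodular.
   Context: A Banach lattice is a Banach space with a lattice partial order (inf/sup $\wedge,\vee$) compatible with addition and nonnegative scaling and with $|\phi_1|\leq|\phi_2|\Rightarrow\|\phi_1\|\leq\|\phi_2\|$ ($\phi^+=\phi\vee0$, $\phi^-=-(\phi\wedge0)$, $|\phi|=\phi^++\phi^-$). $X^*$ carries the dual order ($\mu\leq\nu$ iff $\langle\mu,\phi\rangle\leq\langle\nu,\phi\rangle$ for all $\phi\geq0$); $[a,b]=\{m:a\leq m\leq b\}$. For $F\colon X^*\to\mathbb R\cup\{+\infty\}$, $F^*(\phi)=\sup_{\mu\in X^*}\langle\mu,\phi\rangle-F(\mu)$, $\phi\in X$. $F_2\ll_{\mathrm Q}F_1$ means: for all $\mu_1,\mu_2\in X^*$ and every $t_{21}\in[0,(\mu_2-\mu_1)^+]$ there exists $t_{12}\in[0,(\mu_1-\mu_2)^+]$ with $F_1(\mu_1+t_{21}-t_{12})+F_2(\mu_2-t_{21}+t_{12})\leq F_1(\mu_1)+F_2(\mu_2)$; substitutable means $F\ll_{\mathrm Q}F$. For $E_1,E_2$ on $X$, $E_1\ll_{\mathrm P}E_2$ means $E_1(\phi_1\wedge\phi_2)+E_2(\phi_1\vee\phi_2)\leq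 E_1(\phi_1)+E_2(\phi_2)$ for all $\phi_1,\phi_2$; submodular means $E\ll_{\mathrm P}E$. *)

From HB Require Import structures.
From mathcomp Require Import all_boot all_order all_algebra.
From mathcomp Require Import all_classical all_reals all_analysis.
Set Implicit Arguments. Unset Strict Implicit. Unset Printing Implicit Defensive.
Import Order.TTheory GRing.Theory Num.Theory.
Import numFieldNormedType.Exports.
Local Open Scope ring_scope.
Local Open Scope classical_set_scope.

Section BanachLattice.
Variables (R : realType) (X : completeNormedModType R).
Variables (meet join : X -> X -> X).

Definition bl_le (x y : X) : Prop := meet x y = x.
Definition bl_pos (x : X) : X := join x 0.
Definition bl_neg (x : X) : X := - meet x 0.
Definition bl_abs (x : X) : X := bl_pos x + bl_neg x.

Record is_banach_lattice : Prop := {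
  bl_meetC : forall x y, meet x y = meet y x;
  bl_joinC : forall x y, join x y = join y x;
  bl_meetA : forall x y z, meet x (meet y z) = meet (meet x y) z;
  bl_joinA : forall x y z, join x (join y z) = join (join x y) z;
  bl_meetKU : forall x y, meet x (join x y) = x;
  bl_joinKI : forall x y, join x (meet x y) = x;
  bl_le_add : forall x y z, bl_le x y -> bl_le (x + z) (y + z);
  bl_le_scale : forall (a : R) x y, 0 <= a -> bl_le x y -> bl_le (a *: x) (a *: y);
  bl_norm_mono : forall x y, bl_le (bl_abs x) (bl_abs y) -> `|x| <= `|y|
}.

(* elements of the topological dual X^*, represented as functions X -> R *)
Definition dual (mu : X -> R) : Prop :=
  (forall (a : R) (x y : X), mu (a *: x + y) = a * mu x + mu y) /\ continuous mu.

Definition dle (mu nu : X -> R) : Prop :=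
  forall phi, bl_le 0 phi -> mu phi <= nu phi.

Definition is_dual_sup (p a b : X -> R) : Prop :=
  [/\ dual p, dle a p, dle b p &
      forall q, dual q -> dle a q -> dle b q -> dle p q].

Definition dadd (mu nu : X -> R) : X -> R := fun x => mu x + nu x.
Definition dsub (mu nu : X -> R) : X -> R := fun x => mu x - nu x.
Definition dzero : X -> R := fun _ => 0.

Definition proper_dual (F : (X -> R) -> \bar R) : Prop :=
  (forall mu, dual mu -> F mu <> -oo%E) /\
  (exists mu, dual mu /\ (F mu < +oo)%E).

Definition conj (F : (X -> R) -> \bar R) (phi : X) : \bar R :=
  ereal_sup [set ((mu phi)%:E - F mu)%E | mu in [set mu | dual mu]].

Definition Qrel (F2 F1 : (X -> R) -> \bar R) : Prop :=
  forall mu1 mu2, dual mu1 -> dual mu2 ->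
  forall p q, is_dual_sup p (dsub mu2 mu1) dzero ->
              is_dual_sup q (dsub mu1 mu2) dzero ->
  forall t21, dual t21 -> dle dzero t21 -> dle t21 p ->
  exists t12, [/\ dual t12, dle dzero t12, dle t12 q &
    (F1 (dsub (dadd mu1 t21) t12) + F2 (dadd (dsub mu2 t21) t12)
      <= F1 mu1 + F2 mu2)%E].

Definition substitutable (F : (X -> R) -> \bar R) : Prop := Qrel F F.

Definition Prel (E1 E2 : X -> \bar R) : Prop :=
  forall phi1 phi2,
    (E1 (meet phi1 phi2) + E2 (join phi1 phi2) <= E1 phi1 + E2 phi2)%E.

Definition submodular (E : X -> \bar R) : Prop := Prel E E.

End BanachLattice.

(* Fix [phi1, phi2] and let [psi = (phi1 - phi2)^+], so that
   [phi1 /\ phi2 = phi1 - psi] and [phi1 \/ phi2 = phi2 + psi]. Given [mu1, mu2],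
   let [t21] be the component of [(mu2 - mu1)^+] in the ideal generated by [psi]:
   it agrees with [(mu2 - mu1)^+] at [psi] and vanishes at [(phi1 - phi2)^-],
   which is disjoint from [psi]. Substitutability then provides
   [t12 \in [0, (mu1 - mu2)^+]] such that the exchanged pair
   [m1 = mu1 + t21 - t12], [m2 = mu2 - t21 + t12] does not increase [F1 + F2],
   while [<m1, phi1> + <m2, phi2> >= <mu1, phi1 /\ phi2> + <mu2, phi1 \/ phi2>].
   Taking suprema over [mu1, mu2] gives the inequality between conjugates. *)

From Pilot Require Import Defs.
From HB Require Import structures.
From mathcomp Require Import all_boot all_order all_algebra.
From mathcomp Require Import all_classical all_reals all_analysis.
From mathcomp Require Import ring lra.
Set Implicit Arguments. Unset Strict Implicit. Unset Printing Implicit Defensive.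
Import Order.TTheory GRing.Theory Num.Theory.
Import numFieldNormedType.Exports.
Local Open Scope ring_scope.
Local Open Scope classical_set_scope.

Section ExtendedReals.
Variable R : realType.
Local Open Scope ereal_scope.

Lemma ereal_supDr_le (A : set (\bar R)) (s C : \bar R) :
  (forall a, A a -> a + s <= C) -> ereal_sup A + s <= C.
Proof.
move=> AsC; case: s AsC => [s | | ] AsC; last by rewrite addeNy leNye.
- by rewrite -leeBrDr //; apply: ge_ereal_sup => a /AsC; rewrite leeBrDr.
- have [supA_gt|] := ltP -oo (ereal_sup A); last first.
    by rewrite leeNy_eq => /eqP ->; rewrite addNye leNye.
  have [a Aa a_gt] := ereal_sup_gt supA_gt.
  by have := AsC _ Aa; rewrite !addey ?gt_eqF.
Qed.

Lemma leeD_EFinB_mono (x1 x2 y1 y2 : R) (f1 f2 g1 g2 : \bar R) :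
  f1 != -oo -> f2 != -oo -> g1 != -oo -> g2 != -oo ->
  (x1 + x2 <= y1 + y2)%R -> g1 + g2 <= f1 + f2 ->
  (x1%:E - f1) + (x2%:E - f2) <= (y1%:E - g1) + (y2%:E - g2).
Proof.
case: f1 => [f1||] //; last by rewrite addNye leNye.
case: f2 => [f2||] //; last by rewrite addeNy leNye.
case: g1 => [g1||] //; case: g2 => [g2||] // _ _ _ _.
by rewrite -!EFinD !lee_fin; lra.
Qed.
End ExtendedReals.

Section DualFunctionals.
Variables (R : realType) (X : completeNormedModType R).
Implicit Types (mu nu : X -> R) (x y : X).

Lemma dual0 nu : dual nu -> nu 0 = 0.
Proof. by case=> lin _; have := lin (-1) 0 0; rewrite scaler0 addr0 mulN1r addNr. Qed.

Lemma dualD nu : dual nu -> forall x y, nu (x + y) = nu x + nu y.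
Proof. by case=> lin _ x y; rewrite -[x]scale1r lin mul1r scale1r. Qed.

Lemma dualZ nu : dual nu -> forall (a : R) x, nu (a *: x) = a * nu x.
Proof. by move=> nuD a x; rewrite -[a *: x]addr0 (proj1 nuD) (dual0 nuD) addr0. Qed.

Lemma dualB nu : dual nu -> forall x y, nu (x - y) = nu x - nu y.
Proof. by move=> nuD x y; rewrite (dualD nuD) -scaleN1r (dualZ nuD) mulN1r. Qed.

Lemma dual_bounded nu : dual nu -> exists2 C, 0 < C & forall x, `|nu x| <= C * `|x|.
Proof.
move=> [lin cont].
pose f : {linear X -> R^o} := HB.pack nu (GRing.isLinear.Build R X R^o *:%R nu lin).
have /linear_boundedP/pinfty_ex_gt0[C C_gt0 nuC] :=
  continuous_linear_bounded 0 (cont 0 : {for 0, continuous f}).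
by exists C.
Qed.

Lemma dual_of_bounded nu (C : R) :
  (forall (a : R) x y, nu (a *: x + y) = a * nu x + nu y) ->
  (forall x, `|nu x| <= C * `|x|) -> dual nu.
Proof.
move=> lin nuC; split=> //.
pose f : {linear X -> R^o} := HB.pack nu (GRing.isLinear.Build R X R^o *:%R nu lin).
apply: (@bounded_linear_continuous _ _ _ f); apply/linear_boundedP.
near=> r => x; apply: le_trans (nuC x) _; apply: ler_wpM2r => //.
Unshelve. all: by end_near.
Qed.

Lemma dual_dadd mu nu : dual mu -> dual nu -> dual (Defs.dadd mu nu).
Proof.
move=> [muL muC] [nuL nuC]; split=> [a x y|x]; first by rewrite /Defs.dadd muL nuL; ring.
exact: cvgD (muC x) (nuC x).
Qed.

Lemma dual_dsub mu nu : dual mu -> dual nu -> dual (dsub mu nu).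
Proof.
move=> [muL muC] [nuL nuC]; split=> [a x y|x]; first by rewrite /dsub muL nuL; ring.
exact: cvgB (muC x) (nuC x).
Qed.

Lemma conj_ge (F : (X -> R) -> \bar R) phi mu : dual mu ->
  ((mu phi)%:E - F mu <= conj F phi)%E.
Proof. by move=> muD; apply: ereal_sup_ubound; exists mu. Qed.

End DualFunctionals.

Section BanachLatticeTheory.
Variables (R : realType) (X : completeNormedModType R) (meet join : X -> X -> X).
Hypothesis HX : is_banach_lattice meet join.
Local Notation le := (bl_le meet).
Local Notation pos := (bl_pos join).
Local Notation neg := (bl_neg meet).
Local Notation dle := (Defs.dle meet).
Local Notation dz := (@dzero R X).
Implicit Types (x y z u v : X) (nu : X -> R) (S : set X).

Lemma bl_meetxx x : meet x x = x.
Proof. by have := bl_meetKU HX x (meet x x); rewrite (bl_joinKI HX). Qed.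

Lemma bl_lexx x : le x x.
Proof. exact: bl_meetxx. Qed.

Lemma bl_le_trans y x z : le x y -> le y z -> le x z.
Proof. by rewrite /bl_le => xy yz; rewrite -xy -(bl_meetA HX) yz. Qed.

Lemma bl_le_anti x y : le x y -> le y x -> x = y.
Proof. by rewrite /bl_le => xy yx; rewrite -xy (bl_meetC HX) yx. Qed.

Lemma bl_leIl x y : le (meet x y) x.
Proof. by rewrite /bl_le (bl_meetC HX _ x) (bl_meetA HX) bl_meetxx. Qed.

Lemma bl_leIr x y : le (meet x y) y.
Proof. by rewrite (bl_meetC HX); exact: bl_leIl. Qed.

Lemma bl_lexI x y z : le z x -> le z y -> le z (meet x y).
Proof. by rewrite /bl_le => zx zy; rewrite (bl_meetA HX) zx zy. Qed.

Lemma bl_join_idPr x y : le x y -> join x y = y.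
Proof.
by rewrite /bl_le => xy; rewrite (bl_joinC HX) -{1}xy (bl_meetC HX) (bl_joinKI HX).
Qed.

Lemma bl_leUl x y : le x (join x y).
Proof. exact: (bl_meetKU HX). Qed.

Lemma bl_leUr x y : le y (join x y).
Proof. by rewrite (bl_joinC HX); exact: bl_leUl. Qed.

Lemma bl_leUx x y z : le x z -> le y z -> le (join x y) z.
Proof.
move=> /bl_join_idPr xz /bl_join_idPr yz.
have -> : z = join (join x y) z by rewrite -(bl_joinA HX) yz xz.
exact: bl_leUl.
Qed.

Lemma bl_leD2r z x y : le x y -> le (x + z) (y + z).
Proof. exact: (bl_le_add HX). Qed.

Lemma bl_leD x y u v : le x y -> le u v -> le (x + u) (y + v).
Proof.
move=> xy uv; apply: (bl_le_trans (bl_leD2r u xy)).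
by rewrite ![y + _]addrC; exact: bl_leD2r.
Qed.

Lemma bl_addr_ge0 x y : le 0 x -> le 0 y -> le 0 (x + y).
Proof. by move=> x0 y0; rewrite -(addr0 0); exact: bl_leD. Qed.

Lemma bl_subr_ge0 x y : le 0 (y - x) <-> le x y.
Proof.
split=> [/(bl_leD2r x)|/(bl_leD2r (- x))]; last by rewrite subrr.
by rewrite add0r subrK.
Qed.

Lemma bl_le_addr x y : le 0 y -> le x (x + y).
Proof. by move=> y0; apply/bl_subr_ge0; rewrite addrC addKr. Qed.

Lemma bl_leN2 x y : le x y -> le (- y) (- x).
Proof. by move=> /(bl_leD2r (- x - y)); rewrite addrA subrr add0r addrCA subrr addr0. Qed.

Lemma bl_leZ2l (a : R) x y : 0 <= a -> le x y -> le (a *: x) (a *: y).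
Proof. exact: (bl_le_scale HX). Qed.

Lemma bl_scale_ge0 (a : R) x : 0 <= a -> le 0 x -> le 0 (a *: x).
Proof. by move=> a0 x0; rewrite -(scaler0 _ a); exact: bl_leZ2l. Qed.

Lemma bl_meetDl x y z : meet x y + z = meet (x + z) (y + z).
Proof.
apply: bl_le_anti.
  by apply: bl_lexI; apply: bl_leD2r; [exact: bl_leIl|exact: bl_leIr].
rewrite -[X in le X](subrK z); apply: bl_leD2r; apply: bl_lexI.
  by rewrite -[X in le _ X](addrK z x); apply: bl_leD2r; exact: bl_leIl.
by rewrite -[X in le _ X](addrK z y); apply: bl_leD2r; exact: bl_leIr.
Qed.

Lemma bl_joinDl x y z : join x y + z = join (x + z) (y + z).
Proof.
apply: bl_le_anti; last first.
  by apply: bl_leUx; apply: bl_leD2r; [exact: bl_leUl|exact: bl_leUr].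
rewrite -[X in le _ X](subrK z); apply: bl_leD2r; apply: bl_leUx.
  by rewrite -{1}(addrK z x); apply: bl_leD2r; exact: bl_leUl.
by rewrite -{1}(addrK z y); apply: bl_leD2r; exact: bl_leUr.
Qed.

Lemma bl_oppI x y : - meet x y = join (- x) (- y).
Proof.
apply: bl_le_anti; last first.
  by apply: bl_leUx; apply: bl_leN2; [exact: bl_leIl|exact: bl_leIr].
rewrite -[X in le _ X]opprK; apply: bl_leN2; apply: bl_lexI.
  by rewrite -{2}(opprK x); apply: bl_leN2; exact: bl_leUl.
by rewrite -{2}(opprK y); apply: bl_leN2; exact: bl_leUr.
Qed.

Lemma bl_oppU x y : - join x y = meet (- x) (- y).
Proof. by rewrite -(opprK (meet _ _)) bl_oppI !opprK. Qed.

Lemma bl_meetE x y : meet x y = x - pos (x - y).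
Proof.
rewrite /bl_pos bl_oppU oppr0 opprB addrC bl_meetDl add0r subrK.
exact: (bl_meetC HX).
Qed.

Lemma bl_joinE x y : join x y = y + pos (x - y).
Proof. by rewrite /bl_pos addrC bl_joinDl add0r subrK. Qed.

Lemma bl_pos_ge0 x : le 0 (pos x).
Proof. exact: bl_leUr. Qed.

Lemma bl_neg_ge0 x : le 0 (neg x).
Proof. by rewrite -oppr0; apply: bl_leN2; exact: bl_leIr. Qed.

Lemma bl_pos_subneg x : pos x - neg x = x.
Proof. by rewrite /bl_neg opprK bl_meetE subr0 addrC subrK. Qed.

Lemma bl_meet_pos_neg x : meet (pos x) (neg x) = 0.
Proof.
apply: (addIr (- neg x)); rewrite add0r bl_meetDl subrr bl_pos_subneg.
by rewrite /bl_neg opprK (bl_meetC HX).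
Qed.

Lemma bl_pos_id x : le 0 x -> pos x = x.
Proof. by move=> x0; rewrite /bl_pos (bl_joinC HX) bl_join_idPr. Qed.

Lemma bl_neg_id x : le 0 x -> neg x = 0.
Proof. by move=> x0; rewrite /bl_neg (bl_meetC HX) x0 oppr0. Qed.

Lemma bl_abs_id x : le 0 x -> bl_abs meet join x = x.
Proof. by move=> x0; rewrite /bl_abs bl_pos_id // bl_neg_id // addr0. Qed.

Lemma bl_norm_le x y : le 0 x -> le x y -> `|x| <= `|y|.
Proof.
move=> x0 xy; apply: (bl_norm_mono HX).
by rewrite !bl_abs_id //; exact: bl_le_trans xy.
Qed.

Lemma bl_norm_pos x : `|pos x| <= `|x|.
Proof.
apply: (bl_norm_mono HX); rewrite (bl_abs_id (bl_pos_ge0 x)) /bl_abs.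
by rewrite -{1}(addr0 (pos x)) ![pos x + _]addrC; apply: bl_leD2r; exact: bl_neg_ge0.
Qed.

Lemma bl_norm_neg x : `|neg x| <= `|x|.
Proof.
apply: (bl_norm_mono HX); rewrite (bl_abs_id (bl_neg_ge0 x)) /bl_abs.
by rewrite -{1}(add0r (neg x)); apply: bl_leD2r; exact: bl_pos_ge0.
Qed.

Lemma bl_scaleI (a : R) x y : 0 < a -> a *: meet x y = meet (a *: x) (a *: y).
Proof.
move=> a_gt0; have a_ge0 := ltW a_gt0; have a_neq0 := lt0r_neq0 a_gt0.
apply: bl_le_anti.
  by apply: bl_lexI; apply: bl_leZ2l => //; [exact: bl_leIl|exact: bl_leIr].
rewrite -[X in le X](scalerKV a_neq0); apply: bl_leZ2l => //.
have ai_ge0 : 0 <= a^-1 by rewrite invr_ge0.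
apply: bl_lexI; rewrite -[X in le _ X](scalerK a_neq0); apply: bl_leZ2l => //.
  exact: bl_leIl.
exact: bl_leIr.
Qed.

Lemma bl_disjointZl (c : R) u v : 0 <= c -> le 0 u -> le 0 v -> meet u v = 0 ->
  meet (c *: u) v = 0.
Proof.
move=> c0 u0 v0 uv0; apply: bl_le_anti; last by apply: bl_lexI => //; exact: bl_scale_ge0.
have c1_gt0 : 0 < c + 1 by rewrite ltr_wpDl.
rewrite -(scaler0 _ (c + 1)) -uv0 bl_scaleI //.
rewrite !scalerDl !scale1r.
apply: (@bl_le_trans (meet (c *: u + u) v)); apply: bl_lexI.
- by apply: bl_le_trans (bl_leIl _ _) _; exact: bl_le_addr.
- exact: bl_leIr.
- exact: bl_leIl.
- apply: bl_le_trans (bl_leIr _ _) _; rewrite addrC.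
  by apply: bl_le_addr; exact: bl_scale_ge0.
Qed.

Record positive_ideal S : Prop := {
  ideal0 : S 0;
  ideal_solid : forall y z, le 0 z -> le z y -> S y -> S z;
  idealD : forall y z, S y -> S z -> S (y + z);
  idealZ : forall (c : R) y, 0 <= c -> S y -> S (c *: y) }.

(* Riesz-Kantorovich formula: for [x >= 0], [rk_sup nu S x] is the value at [x]
   of the component of [nu^+] carried by the ideal [S]; for [S = setT] the
   functional [ideal_part nu S] is [nu^+] itself. *)
Definition rk_sup nu S x : R :=
  sup [set nu y | y in [set y | [/\ le 0 y, le y x & S y]]].

Definition ideal_part nu S x : R := rk_sup nu S (pos x) - rk_sup nu S (neg x).

Section IdealPart.
Variables (nu : X -> R) (S : set X).
Hypotheses (nu_dual : dual nu) (S_ideal : positive_ideal S).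
Local Notation P := (rk_sup nu S).

Lemma rk_sup_ub x y : le 0 y -> le y x -> S y -> nu y <= P x.
Proof.
move=> y0 yx Sy; have [C C_gt0 nuC] := dual_bounded nu_dual.
apply: sup_upper_bound; last by exists y.
split; first by exists (nu y), y.
exists (C * `|x|) => _ [z [z0 zx _] <-].
apply: le_trans (ler_norm _) _; apply: le_trans (nuC z) _.
by rewrite ler_pM2l // bl_norm_le.
Qed.

Lemma rk_sup_le x (b : R) : le 0 x ->
  (forall y, le 0 y -> le y x -> S y -> nu y <= b) -> P x <= b.
Proof.
move=> x0 nub; apply: ge_sup; last by move=> _ [y [y0 yx Sy] <-]; exact: nub.
by exists (nu 0), 0; first split; [exact: bl_lexx| |exact: (ideal0 S_ideal)|].
Qed.

Lemma rk_sup_ge0 x : le 0 x -> 0 <= P x.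
Proof.
move=> x0; rewrite -(dual0 nu_dual).
by apply: rk_sup_ub => //; [exact: bl_lexx|exact: (ideal0 S_ideal)].
Qed.

Lemma rk_sup0 : P 0 = 0.
Proof.
apply/eqP; rewrite eq_le rk_sup_ge0 ?andbT; last exact: bl_lexx.
apply: rk_sup_le; first exact: bl_lexx.
by move=> y y0 y_le0; rewrite (bl_le_anti y_le0 y0) (dual0 nu_dual).
Qed.

(* Riesz decomposition: [0 <= y <= x1 + x2] splits as [(y /\ x1) + (y - x1)^+]. *)
Lemma rk_supD x1 x2 : le 0 x1 -> le 0 x2 -> P (x1 + x2) = P x1 + P x2.
Proof.
move=> x10 x20; have x120 := bl_addr_ge0 x10 x20.
apply/eqP; rewrite eq_le; apply/andP; split.
  apply: rk_sup_le => // y y0 yx Sy.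
  have y_split : y = meet y x1 + pos (y - x1) by rewrite bl_meetE subrK.
  have y1_le : le (meet y x1) y := bl_leIl y x1.
  have y2_le : le (pos (y - x1)) y.
    by rewrite [X in le _ X]y_split [X in le _ X]addrC; apply: bl_le_addr; exact: bl_lexI.
  rewrite y_split (dualD nu_dual); apply: lerD; apply: rk_sup_ub.
  - exact: bl_lexI.
  - exact: bl_leIr.
  - by apply: (ideal_solid S_ideal) y1_le Sy => //; exact: bl_lexI.
  - exact: bl_pos_ge0.
  - apply: bl_leUx => //.
    by have := bl_leD2r (- x1) yx; rewrite [x1 + x2]addrC addrK.
  - by apply: (ideal_solid S_ideal) y2_le Sy => //; exact: bl_pos_ge0.
rewrite -lerBrDr; apply: rk_sup_le => // y1 y10 y1x Sy1.
rewrite lerBrDr addrC -lerBrDr; apply: rk_sup_le => // y2 y20 y2x Sy2.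
rewrite lerBrDr addrC -(dualD nu_dual); apply: rk_sup_ub.
- exact: bl_addr_ge0.
- exact: bl_leD.
- exact: (idealD S_ideal).
Qed.

Lemma rk_supZ (c : R) x : 0 < c -> le 0 x -> P (c *: x) = c * P x.
Proof.
move=> c_gt0 x0; have c_ge0 := ltW c_gt0; have c_neq0 := lt0r_neq0 c_gt0.
have ci_ge0 : 0 <= c^-1 by rewrite invr_ge0.
apply/eqP; rewrite eq_le; apply/andP; split.
  apply: rk_sup_le => [|y y0 yx Sy]; first exact: bl_scale_ge0.
  rewrite -(scalerKV c_neq0 y) (dualZ nu_dual) ler_pM2l //; apply: rk_sup_ub.
  - exact: bl_scale_ge0.
  - by rewrite -(scalerK c_neq0 x); exact: bl_leZ2l.
  - exact: (idealZ S_ideal).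
rewrite -ler_pdivlMl //; apply: rk_sup_le => // y y0 yx Sy.
rewrite ler_pdivlMl // -(dualZ nu_dual); apply: rk_sup_ub.
- exact: bl_scale_ge0.
- exact: bl_leZ2l.
- exact: (idealZ S_ideal).
Qed.

Lemma ideal_partB u v : le 0 u -> le 0 v -> ideal_part nu S (u - v) = P u - P v.
Proof.
move=> u0 v0; rewrite /ideal_part; set z := u - v.
have : pos z + v = neg z + u.
  have pos_z : pos z = z + neg z by rewrite -{2}(bl_pos_subneg z) subrK.
  by rewrite pos_z /z addrAC subrK addrC.
move/(congr1 P); rewrite !rk_supD //; [lra|exact: bl_neg_ge0|exact: bl_pos_ge0].
Qed.

Lemma ideal_partE x : le 0 x -> ideal_part nu S x = P x.
Proof.
by move=> x0; rewrite -[x]subr0 ideal_partB ?rk_sup0 ?subr0 //; exact: bl_lexx.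
Qed.

Lemma ideal_partD x y : ideal_part nu S (x + y) = ideal_part nu S x + ideal_part nu S y.
Proof.
have -> : x + y = (pos x + pos y) - (neg x + neg y).
  by rewrite opprD addrACA !bl_pos_subneg.
have pos_ge0 : le 0 (pos x + pos y) by apply: bl_addr_ge0; exact: bl_pos_ge0.
have neg_ge0 : le 0 (neg x + neg y) by apply: bl_addr_ge0; exact: bl_neg_ge0.
rewrite ideal_partB // !rk_supD /ideal_part; first lra.
all: by [apply: bl_pos_ge0 | apply: bl_neg_ge0].
Qed.

Lemma ideal_partN x : ideal_part nu S (- x) = - ideal_part nu S x.
Proof.
rewrite -{1}(bl_pos_subneg x) opprB ideal_partB; last exact: bl_pos_ge0.
  by rewrite /ideal_part opprB.
exact: bl_neg_ge0.
Qed.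

Lemma ideal_partZ (a : R) x : ideal_part nu S (a *: x) = a * ideal_part nu S x.
Proof.
wlog a_ge0 : a x / 0 <= a => [ZP|].
  have [|a_lt0] := leP 0 a; first exact: ZP.
  rewrite -[a *: x]opprK -scalerN -scaleNr ZP ?oppr_ge0 ?ltW //.
  by rewrite ideal_partN mulrNN.
move: a_ge0; rewrite le0r => /orP[/eqP->|a_gt0].
  by rewrite scale0r mul0r ideal_partE ?rk_sup0 //; exact: bl_lexx.
rewrite -{1}(bl_pos_subneg x) scalerBr ideal_partB.
- by rewrite !rk_supZ /ideal_part ?mulrBr //; [exact: bl_neg_ge0|exact: bl_pos_ge0].
- by apply: bl_scale_ge0; [exact: ltW|exact: bl_pos_ge0].
- by apply: bl_scale_ge0; [exact: ltW|exact: bl_neg_ge0].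
Qed.

Lemma ideal_part_dual : dual (ideal_part nu S).
Proof.
have [C C_gt0 nuC] := dual_bounded nu_dual.
have P_le x : le 0 x -> P x <= C * `|x|.
  move=> x0; apply: rk_sup_le => // y y0 yx _.
  apply: le_trans (ler_norm _) _; apply: le_trans (nuC y) _.
  by rewrite ler_pM2l // bl_norm_le.
apply: (@dual_of_bounded _ _ _ (C + C)) => [a x y|x].
  by rewrite ideal_partD ideal_partZ.
have := P_le _ (bl_pos_ge0 x); have := P_le _ (bl_neg_ge0 x).
have := rk_sup_ge0 (bl_pos_ge0 x); have := rk_sup_ge0 (bl_neg_ge0 x).
have : C * `|pos x| <= C * `|x| by rewrite ler_pM2l // bl_norm_pos.
have : C * `|neg x| <= C * `|x| by rewrite ler_pM2l // bl_norm_neg.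
rewrite /ideal_part ler_norml mulrDl; move=> *; apply/andP; split; lra.
Qed.

Lemma ideal_part_ge0 : dle dz (ideal_part nu S).
Proof. by move=> x x0; rewrite ideal_partE //; exact: rk_sup_ge0. Qed.

End IdealPart.

Definition principal_ideal (psi : X) : set X :=
  [set y | exists2 c : R, 0 <= c & le y (c *: psi)].

Lemma principal_ideal_ideal psi : positive_ideal (principal_ideal psi).
Proof.
split.
- by exists 0 => //; rewrite scale0r; exact: bl_lexx.
- by move=> y z _ zy [c c0 yc]; exists c => //; exact: bl_le_trans yc.
- move=> y z [c1 c10 yc1] [c2 c20 zc2]; exists (c1 + c2); first exact: addr_ge0.
  by rewrite scalerDl; exact: bl_leD.
- move=> c y c0 [e e0 ye]; exists (c * e); first exact: mulr_ge0.
  by rewrite -scalerA; exact: bl_leZ2l.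
Qed.

Lemma ideal_part_le_setT nu S : dual nu -> positive_ideal S ->
  dle (ideal_part nu S) (ideal_part nu [set: X]).
Proof.
move=> nuD SI x x0; rewrite !ideal_partE //; apply: rk_sup_le => // y y0 yx _.
exact: rk_sup_ub.
Qed.

Lemma ideal_part_setT_sup nu : dual nu -> is_dual_sup meet (ideal_part nu [set: X]) nu dz.
Proof.
move=> nuD; split.
- exact: ideal_part_dual.
- by move=> x x0; rewrite ideal_partE //; exact: rk_sup_ub (bl_lexx x) _.
- exact: ideal_part_ge0.
- move=> q qD nu_le_q q_ge0 x x0; rewrite ideal_partE //.
  apply: rk_sup_le => // y y0 yx _; apply: le_trans (nu_le_q y y0) _.
  have := q_ge0 (x - y) (iffRL (bl_subr_ge0 y x) yx).
  by rewrite /dzero (dualB qD) subr_ge0.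
Qed.

Lemma principal_part_generator nu psi : dual nu -> le 0 psi ->
  ideal_part nu (principal_ideal psi) psi = ideal_part nu [set: X] psi.
Proof.
move=> nuD psi0; have psiI := principal_ideal_ideal psi.
apply/eqP; rewrite eq_le ideal_part_le_setT //= !ideal_partE //.
apply: rk_sup_le => // y y0 ypsi _.
by apply: rk_sup_ub => //; exists 1; rewrite ?scale1r.
Qed.

Lemma principal_part_disjoint nu psi v : dual nu -> le 0 psi -> le 0 v ->
  meet psi v = 0 -> ideal_part nu (principal_ideal psi) v = 0.
Proof.
move=> nuD psi0 v0 psiv0; have psiI := principal_ideal_ideal psi.
apply/eqP; rewrite eq_le ideal_part_ge0 // andbT ideal_partE //.
apply: rk_sup_le => // y y0 yv [c c0 ypsi].
have : le y (meet (c *: psi) v) by exact: bl_lexI.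
rewrite bl_disjointZl // => y_le0.
by rewrite (bl_le_anti y_le0 y0) (dual0 nuD).
Qed.

Lemma dual_sup_swap mu1 mu2 p : dual mu1 -> dual mu2 ->
  is_dual_sup meet p (dsub mu2 mu1) dz ->
  is_dual_sup meet (dsub p (dsub mu2 mu1)) (dsub mu1 mu2) dz.
Proof.
move=> mu1D mu2D [pD nu_le_p p_ge0 p_least].
split; [exact/dual_dsub/dual_dsub| | |].
- by move=> x x0; have := p_ge0 x x0; rewrite /dsub /dzero; lra.
- by move=> x x0; have := nu_le_p x x0; rewrite /dsub /dzero; lra.
- move=> q qD le_q ge0_q x x0.
  have q'D : dual (Defs.dadd q (dsub mu2 mu1)) by exact/dual_dadd/dual_dsub.
  have nu_le_q' : dle (dsub mu2 mu1) (Defs.dadd q (dsub mu2 mu1)).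
    by move=> y y0; have := ge0_q y y0; rewrite /dsub /Defs.dadd /dzero; lra.
  have q'_ge0 : dle dz (Defs.dadd q (dsub mu2 mu1)).
    by move=> y y0; have := le_q y y0; rewrite /dsub /Defs.dadd /dzero; lra.
  by have := p_least _ q'D nu_le_q' q'_ge0 x x0; rewrite /dsub /Defs.dadd; lra.
Qed.

Lemma meet_join_exchange mu1 mu2 t21 t12 phi1 phi2 :
  dual mu1 -> dual mu2 -> dual t21 -> dual t12 ->
  t21 (neg (phi1 - phi2)) = 0 -> 0 <= t12 (neg (phi1 - phi2)) ->
  mu2 (pos (phi1 - phi2)) - mu1 (pos (phi1 - phi2)) + t12 (pos (phi1 - phi2))
    <= t21 (pos (phi1 - phi2)) ->
  mu1 (meet phi1 phi2) + mu2 (join phi1 phi2)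
    <= dsub (Defs.dadd mu1 t21) t12 phi1 + Defs.dadd (dsub mu2 t21) t12 phi2.
Proof.
move=> mu1D mu2D t21D t12D; set psi := pos _; set psi' := neg _.
have t21E : t21 phi1 - t21 phi2 = t21 psi - t21 psi'.
  by rewrite -!(dualB t21D) bl_pos_subneg.
have t12E : t12 phi1 - t12 phi2 = t12 psi - t12 psi'.
  by rewrite -!(dualB t12D) bl_pos_subneg.
rewrite bl_meetE bl_joinE (dualB mu1D) (dualD mu2D) /dsub /Defs.dadd; lra.
Qed.

Lemma Qrel_exchange F1 F2 phi1 phi2 mu1 mu2 :
  Qrel meet F2 F1 -> dual mu1 -> dual mu2 ->
  exists m1 m2, [/\ dual m1, dual m2, (F1 m1 + F2 m2 <= F1 mu1 + F2 mu2)%E &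
    mu1 (meet phi1 phi2) + mu2 (join phi1 phi2) <= m1 phi1 + m2 phi2].
Proof.
move=> FQ mu1D mu2D; set nu := dsub mu2 mu1; have nuD : dual nu := dual_dsub mu2D mu1D.
set psi := pos (phi1 - phi2); have psi0 : le 0 psi := bl_pos_ge0 _.
have psiI := principal_ideal_ideal psi.
set p := ideal_part nu [set: X]; set t21 := ideal_part nu (principal_ideal psi).
have p_sup : is_dual_sup meet p nu dz := ideal_part_setT_sup nuD.
have t21D : dual t21 := ideal_part_dual nuD psiI.
have [t12 [t12D t12_ge0 t12_le FF]] := FQ mu1 mu2 mu1D mu2D p _ p_sup
  (dual_sup_swap mu1D mu2D p_sup) t21 t21D (ideal_part_ge0 nuD psiI)
  (ideal_part_le_setT nuD psiI).
exists (dsub (Defs.dadd mu1 t21) t12), (Defs.dadd (dsub mu2 t21) t12); split=> //.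
- exact/dual_dsub/t12D/dual_dadd.
- exact/dual_dadd/t12D/dual_dsub.
apply: meet_join_exchange => //.
- exact: principal_part_disjoint (bl_pos_ge0 _) (bl_neg_ge0 _) (bl_meet_pos_neg _).
- exact: t12_ge0 (bl_neg_ge0 _).
- have := t12_le psi psi0.
  by rewrite /t21 principal_part_generator // -/psi -/p /dsub; lra.
Qed.

Lemma Prel_conj F1 F2 :
  (forall mu, dual mu -> F1 mu <> -oo%E) -> (forall mu, dual mu -> F2 mu <> -oo%E) ->
  Qrel meet F2 F1 -> Prel meet join (conj F1) (conj F2).
Proof.
move=> F1_finite F2_finite FQ phi1 phi2.
apply: ereal_supDr_le => _ [mu1 mu1D <-]; rewrite addeC.
apply: ereal_supDr_le => _ [mu2 mu2D <-]; rewrite addeC.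
have [m1 [m2 [m1D m2D FF lin]]] := Qrel_exchange phi1 phi2 FQ mu1D mu2D.
apply: le_trans (leeD (conj_ge F1 phi1 m1D) (conj_ge F2 phi2 m2D)).
by apply: leeD_EFinB_mono => //; apply/eqP; first [exact: F1_finite|exact: F2_finite].
Qed.

End BanachLatticeTheory.

Theorem theorem2p50 (R : realType) (X : completeNormedModType R)
  (meet join : X -> X -> X) (HX : is_banach_lattice meet join) :
  (forall F1 F2 : (X -> R) -> \bar R,
     proper_dual F1 -> proper_dual F2 -> Qrel meet F2 F1 ->
     Prel meet join (conj F1) (conj F2)) /\
  (forall F : (X -> R) -> \bar R,
     proper_dual F -> substitutable meet F ->
     submodular meet join (conj F)).
Proof.
split=> [F1 F2 [F1_finite _] [F2_finite _]|F [F_finite _]]; exact: Prel_conj.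
Qed.
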